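(* Let $\zeta>1$. If a distribution $\mu$ over $\{-1,+1\}^n$ is $\zeta$-marginally stable, then for every $\alpha\in(0,1)$, every $x\in\mathbb R^n_{>0}$ and every $i\in[n]$ with $x_i\ge(2\zeta)^{1/(1-\alpha)}$, $$\frac{\partial F_{\mu,\alpha}}{\partial z_i}\Big|_{z=x}\le0,$$ where $F_{\mu,\alpha}(z)=\dfrac{g_\mu(z_1^\alpha,\dots,z_n^\alpha)^{1/\alpha}}{\prod_{j=1}^n(\mu_j(+1)z_j+\mu_j(-1))}$.
   Context: $g_\mu(z)=\sum_\sigma\mu(\sigma)\prod_{j:\sigma_j=+1}z_j$; $\mu_j$ marginal at coordinate $j$; $\Omega(\cdot)$ support; $\mu_\Lambda$ marginal on $\Lambda$; $\mu^\sigma$ conditional on $\sigma\in\Omega(\mu_\Lambda)$. $\zeta$-marginal stability: for every $i\in[n]$, every $S\subseteq\Lambda\subseteq[n]\setminus\{i\}$, and every $\sigma\in\Omega(\mu_\Lambda)$, $R_i^\sigma\le\zeta$ and $R_i^\sigma\le\zeta R_i^{\sigma_S}$, where $R_i^\sigma=\mu_i^\sigma(+1)/\mu_i^\sigma(-1)$. *)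

From HB Require Import structures.
From mathcomp Require Import all_boot all_order all_algebra.
From mathcomp Require Import all_classical all_reals all_analysis.
Set Implicit Arguments. Unset Strict Implicit. Unset Printing Implicit Defensive.
Import Order.TTheory GRing.Theory Num.Theory.
Import numFieldNormedType.Exports.
Local Open Scope ring_scope.

(* A configuration in {-1,+1}^n: sigma j = true encodes sigma_j = +1,
   sigma j = false encodes sigma_j = -1. *)
Definition config (n : nat) := {ffun 'I_n -> bool}.

Section Defs.
Variables (R : realType) (n : nat).

Definition is_distribution (mu : config n -> R) : Prop :=
  (forall s, 0 <= mu s) /\ \sum_(s : config n) mu s = 1.

Definition agree (L : {set 'I_n}) (sigma tau : config n) : bool :=
  [forall j in L, tau j == sigma j].

Definition marg (mu : config n -> R) (L : {set 'I_n}) (sigma : config n) : R :=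
  \sum_(tau : config n | agree L sigma tau) mu tau.

Definition in_support (mu : config n -> R) (L : {set 'I_n}) (sigma : config n) : Prop :=
  0 < marg mu L sigma.

Definition cond_marg (mu : config n -> R) (L : {set 'I_n}) (sigma : config n)
    (i : 'I_n) (b : bool) : R :=
  (\sum_(tau : config n | agree L sigma tau && (tau i == b)) mu tau) / marg mu L sigma.

(* The ratio R_i^sigma = mu_i^sigma(+1)/mu_i^sigma(-1)
   takes values in [0, +oo]; the inequalities R_i^sigma <= zeta and
   R_i^sigma <= zeta R_i^{sigma_S} are written in cross-multiplied form,
   which is exactly their meaning including the value +oo. *)
Definition marginally_stable (zeta : R) (mu : config n -> R) : Prop :=
  forall (i : 'I_n) (S L : {set 'I_n}) (sigma : config n),
    S \subset L -> i \notin L -> in_support mu L sigma ->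
      cond_marg mu L sigma i true <= zeta * cond_marg mu L sigma i false /\
      cond_marg mu L sigma i true * cond_marg mu S sigma i false
        <= zeta * (cond_marg mu S sigma i true * cond_marg mu L sigma i false).

Definition gen_poly (mu : config n -> R) (z : 'I_n -> R) : R :=
  \sum_(s : config n) mu s * \prod_(j < n | s j) z j.

Definition marg1 (mu : config n -> R) (j : 'I_n) (b : bool) : R :=
  \sum_(s : config n | s j == b) mu s.

Definition Fma (mu : config n -> R) (alpha : R) (z : 'I_n -> R) : R :=
  powR (gen_poly mu (fun j => powR (z j) alpha)) alpha^-1 /
  \prod_(j < n) (marg1 mu j true * z j + marg1 mu j false).

Definition upd (z : 'I_n -> R) (i : 'I_n) (t : R) : 'I_n -> R :=
  fun j => if j == i then t else z j.

End Defs.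

(* Along the i-th coordinate, F is t |-> (A + t^a B)^(1/a) / ((p t + q) C), where A and B
   collect the terms of g_mu with sigma_i = -1 and sigma_i = +1, p = mu_i(+1) and q = mu_i(-1).
   Its derivative has the sign of t^(a-1) B q - A p.  Pairing each sigma with sigma_i = -1 with
   its flip at i, marginal stability for Lambda = [n] \ {i} and S = {} gives
   mu(flip sigma) q <= zeta p mu(sigma), hence B q <= zeta p A; and t^(1-a) >= 2 zeta makes
   t^(a-1) B q at most A p / 2. *)

From HB Require Import structures.
From mathcomp Require Import all_boot all_order all_algebra.
From mathcomp Require Import all_classical all_reals all_analysis.
From mathcomp Require Import lra ring.
Set Implicit Arguments. Unset Strict Implicit. Unset Printing Implicit Defensive.
Import Order.TTheory GRing.Theory Num.Theory.
Import numFieldNormedType.Exports.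
Local Open Scope ring_scope.

Section PowRCalculus.
Variable R : realType.
Implicit Types A B a b c r t u : R.

Lemma powR_subr1 r u : 0 < u -> powR u r = powR u (r - 1) * u.
Proof.
move=> u0; rewrite -[in LHS](subrK 1 r) [in LHS]powRD; last by rewrite (gt_eqF u0) implybT.
by rewrite powRr1 // ltW.
Qed.

Lemma is_derive_powR_ratio A B a b c t :
  0 < a -> 0 < t -> 0 < A + powR t a * B -> b * t + c != 0 ->
  is_derive t 1 (fun s => powR (A + powR s a * B) a^-1 / (b * s + c))
    (powR (A + powR t a * B) (a^-1 - 1) / (b * t + c) ^+ 2
       * (powR t (a - 1) * B * c - A * b)).
Proof.
move=> a0 t0 g0 d0.
have dg : is_derive t 1 (fun s => A + powR s a * B) (a * powR t (a - 1) * B).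
  have -> : (fun s => A + powR s a * B) = cst A + (@powR R ^~ a) * cst B by [].
  have dp := is_derive1_powR a t0.
  by apply: is_derive_eq; rewrite /GRing.scale /=; ring.
have dd : is_derive t 1 (fun s => b * s + c) b.
  have -> : (fun s => b * s + c) = b *: id + cst c by [].
  by apply: is_derive_eq; rewrite addr0 /GRing.scale /= mulr1.
have dG := @is_derive1_comp _ (@powR R ^~ a^-1) _ t _ _ (is_derive1_powR a^-1 g0) dg.
have dF := is_deriveM dG (@is_deriveV R (fun s => b * s + c) t b 1 d0 dd).
apply: (is_derive_eq dF).
rewrite /= /GRing.scale /= (powR_subr1 a^-1 g0) [powR t a](powR_subr1 a t0).
by field; rewrite d0 gt_eqF.
Qed.

Lemma powR_threshold a c t : 0 < c -> a < 1 -> 0 < t ->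
  powR c (1 - a)^-1 <= t -> c * powR t (a - 1) <= 1.
Proof.
move=> c0 a1 t0 ct; have b0 : 0 < 1 - a by rewrite subr_gt0.
have := ge0_ler_powR (ltW b0) (powR_ge0 c (1 - a)^-1) (ltW t0) ct.
rewrite -powRrM mulVf ?gt_eqF // powRr1 ?(ltW c0) // => cta.
have tpos : 0 < powR t (1 - a) by exact: powR_gt0.
by rewrite -(opprB 1 a) powRN -(ler_pM2r tpos) mul1r -mulrA mulVf ?mulr1 ?gt_eqF.
Qed.

Lemma derive1_powR_ratio_le0 A B a b c t zeta :
  0 < a < 1 -> 0 < t -> 0 <= A -> 0 <= b -> 0 < zeta ->
  0 < A + powR t a * B -> 0 < b * t + c ->
  B * c <= zeta * b * A -> powR zeta (1 - a)^-1 <= t ->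
  derive1 (fun s => powR (A + powR s a * B) a^-1 / (b * s + c)) t <= 0.
Proof.
move=> /andP[a_gt0 a_lt1] t_gt0 A_ge0 b_ge0 zeta_gt0 g_gt0 d_gt0 key large.
have dF := is_derive_powR_ratio a_gt0 t_gt0 g_gt0 (lt0r_neq0 d_gt0).
rewrite derive1E derive_val; apply: mulr_ge0_le0.
  by rewrite divr_ge0 ?powR_ge0 ?sqr_ge0.
have zu_le1 := powR_threshold zeta_gt0 a_lt1 t_gt0 large.
set u := powR t (a - 1) in zu_le1 *.
have u_ge0 : 0 <= u by exact: powR_ge0.
rewrite subr_le0 -mulrA; apply: le_trans (ler_wpM2l u_ge0 key) _.
rewrite (_ : u * _ = zeta * u * (b * A)); last by ring.
apply: le_trans (ler_wpM2r _ zu_le1) _; first by rewrite mulr_ge0.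
by rewrite mul1r mulrC.
Qed.

End PowRCalculus.

Section SplitAtCoordinate.
Variables (R : realType) (n : nat) (mu : config n -> R) (i : 'I_n).

Definition toggle (s : config n) : config n :=
  [ffun j => if j == i then ~~ s j else s j].

Lemma toggleK : involutive toggle.
Proof. by move=> s; apply/ffunP => j; rewrite !ffunE; case: eqP => // _; rewrite negbK. Qed.

Lemma toggle_at s : toggle s i = ~~ s i.
Proof. by rewrite ffunE eqxx. Qed.

Lemma toggle_neq s j : j != i -> toggle s j = s j.
Proof. by rewrite ffunE => /negbTE ->. Qed.

Definition gen_part (b : bool) (z : 'I_n -> R) : R :=
  \sum_(s : config n | s i == b) mu s * \prod_(j < n | s j && (j != i)) z j.

Lemma gen_poly_split z : gen_poly mu z = gen_part false z + z i * gen_part true z.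
Proof.
rewrite /gen_poly (bigID (fun s : config n => s i)) /= addrC mulr_sumr; congr (_ + _).
  apply: eq_big => [s|s /negbTE si]; first by rewrite eqbF_neg.
  congr (_ * _); apply: eq_bigl => j.
  by case: eqVneq => [->|]; rewrite ?si ?andbT ?andbF.
apply: eq_big => [s|s si]; first by rewrite eqb_id.
by rewrite (bigD1 i) //= mulrCA.
Qed.

Lemma gen_part_ge0 b z : (forall s, 0 <= mu s) -> (forall j, 0 <= z j) ->
  0 <= gen_part b z.
Proof. by move=> mu_ge0 z_ge0; apply: sumr_ge0 => s _; rewrite mulr_ge0 ?prodr_ge0. Qed.

Lemma gen_part_upd b z t : gen_part b (upd z i t) = gen_part b z.
Proof.
apply: eq_bigr => s _; congr (_ * _).
by apply: eq_bigr => j /andP[_ /negbTE ji]; rewrite /upd ji.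
Qed.

Hypothesis mu_distr : is_distribution mu.

Lemma marg_set0 s : marg mu finset.set0 s = 1.
Proof.
case: mu_distr => _ <-; apply: eq_bigl => tau.
by apply/forall_inP => j; rewrite inE.
Qed.

Lemma cond_marg_set0 s b : cond_marg mu finset.set0 s i b = marg1 mu i b.
Proof.
rewrite /cond_marg marg_set0 divr1; apply: eq_bigl => tau.
by have -> : agree finset.set0 s tau by apply/forall_inP => j; rewrite inE.
Qed.

Lemma sum_agree_setC1 s b :
  \sum_(tau : config n | agree [set~ i] s tau && (tau i == b)) mu tau =
  mu (if s i == b then s else toggle s).
Proof.
set w := if s i == b then s else toggle s.
have w_at : w i = b.
  by rewrite /w; case: eqP => [//|]; rewrite toggle_at; case: (s i); case: (b).
have w_off j : j != i -> w j = s j.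
  by rewrite /w; case: (s i == b) => //; exact: toggle_neq.
rewrite (big_pred1 w) // => tau; apply/andP/eqP => [[/forall_inP ag /eqP tau_at]|->].
  apply/ffunP => j; have [->|ji] := eqVneq j i; first by rewrite tau_at w_at.
  by rewrite w_off //; apply/eqP/ag; rewrite in_setC1.
split; last by rewrite w_at.
by apply/forall_inP => j; rewrite in_setC1 => /w_off ->.
Qed.

Lemma marg_setC1 (s : config n) : s i = false -> marg mu [set~ i] s = mu s + mu (toggle s).
Proof.
move=> si; rewrite /marg (bigID (fun tau : config n => tau i == false)) /=.
rewrite sum_agree_setC1 si eqxx; congr (_ + _).
have := sum_agree_setC1 s true; rewrite si /= => <-.
by apply: eq_bigl => tau; rewrite eqbF_neg negbK eqb_id.
Qed.

Lemma stable_toggle zeta (s : config n) : marginally_stable zeta mu -> s i = false ->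
  mu (toggle s) * marg1 mu i false <= zeta * marg1 mu i true * mu s.
Proof.
move=> st si; case: (mu_distr) => mu_ge0 _.
have [m_gt0|] := ltP 0 (marg mu [set~ i] s); last first.
  rewrite marg_setC1 // => m_le0.
  have mu_s0 : mu s = 0 by have := mu_ge0 (toggle s); have := mu_ge0 s; lra.
  have mu_t0 : mu (toggle s) = 0 by have := mu_ge0 (toggle s); have := mu_ge0 s; lra.
  by rewrite mu_s0 mu_t0 mul0r mulr0.
have iNL : i \notin [set~ i] by rewrite !inE eqxx.
have [_] := st i _ _ s (finset.sub0set _) iNL m_gt0.
rewrite !cond_marg_set0 /cond_marg !sum_agree_setC1 si /=.
set m := marg mu [set~ i] s.
have -> : mu (toggle s) / m * marg1 mu i false = mu (toggle s) * marg1 mu i false / m by ring.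
have -> : zeta * (marg1 mu i true * (mu s / m)) = zeta * marg1 mu i true * mu s / m by ring.
by rewrite ler_pM2r // invr_gt0.
Qed.

Lemma gen_part_stable zeta z : marginally_stable zeta mu -> (forall j, 0 <= z j) ->
  gen_part true z * marg1 mu i false <= zeta * marg1 mu i true * gen_part false z.
Proof.
move=> st z_ge0.
rewrite /gen_part (reindex_inj (can_inj toggleK)) mulr_suml mulr_sumr /=.
rewrite (eq_bigl (fun s : config n => s i == false)) => [|s]; last first.
  by rewrite toggle_at; case: (s i).
apply: ler_sum => s /eqP si.
have -> : \prod_(j < n | toggle s j && (j != i)) z j = \prod_(j < n | s j && (j != i)) z j.
  by apply: eq_bigl => j; have [->|/toggle_neq ->] := eqVneq j i; rewrite ?andbF.
rewrite mulrAC mulrA; apply: ler_wpM2r; last exact: stable_toggle.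
by apply: prodr_ge0 => j _.
Qed.

End SplitAtCoordinate.

Section Distribution.
Variables (R : realType) (n : nat) (mu : config n -> R).
Hypothesis mu_distr : is_distribution mu.

Lemma marg1_ge0 j b : 0 <= marg1 mu j b.
Proof. by case: mu_distr => mu_ge0 _; apply: sumr_ge0. Qed.

Lemma marg1_sum j : marg1 mu j true + marg1 mu j false = 1.
Proof.
case: mu_distr => _ <-; rewrite (bigID (fun s : config n => s j)) /=.
by congr (_ + _); apply: eq_bigl => s; rewrite ?eqb_id ?eqbF_neg.
Qed.

Lemma marg1_affine_gt0 j y : 0 < y -> 0 < marg1 mu j true * y + marg1 mu j false.
Proof.
move=> y_gt0; have := marg1_sum j; have := marg1_ge0 j true; have := marg1_ge0 j false.
nra.
Qed.

Lemma gen_poly_gt0 z : (forall j, 0 < z j) -> 0 < gen_poly mu z.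
Proof.
move=> z_gt0; case: mu_distr => mu_ge0 mu_sum.
have [|s /andP[_ mu_s_gt0]] := psumr_neq0P (fun s _ => mu_ge0 s) (P := predT).
  by rewrite mu_sum; apply/eqP; exact: oner_neq0.
have term_ge0 (t : config n) : 0 <= mu t * \prod_(j < n | t j) z j.
  by rewrite mulr_ge0 // prodr_ge0 // => j _; rewrite ltW.
rewrite /gen_poly (bigD1 s) //=; apply: (@lt_le_trans _ _ (mu s * \prod_(j < n | s j) z j)).
  by rewrite mulr_gt0 // prodr_gt0.
by rewrite lerDl sumr_ge0.
Qed.

End Distribution.

Lemma Fma_upd (R : realType) n (mu : config n -> R) a (x : 'I_n -> R) i t :
  let w j := powR (x j) a in
  Fma mu a (upd x i t) =
  powR (gen_part mu i false w + powR t a * gen_part mu i true w) a^-1 /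
  ((marg1 mu i true * t + marg1 mu i false) *
   \prod_(j < n | j != i) (marg1 mu j true * x j + marg1 mu j false)).
Proof.
move=> w; rewrite /Fma.
have -> : (fun j => powR (upd x i t j) a) = upd w i (powR t a).
  by apply/funext => j; rewrite /upd; case: eqP.
rewrite (gen_poly_split _ i) !gen_part_upd /upd eqxx (bigD1 i) //= eqxx.
by congr (_ / (_ * _)); apply: eq_bigr => j /negbTE ->.
Qed.

Theorem lemma5p3 (R : realType) (n : nat) (zeta : R) (mu : config n -> R) :
  1 < zeta -> is_distribution mu -> marginally_stable zeta mu ->
  forall (alpha : R) (x : 'I_n -> R) (i : 'I_n),
    0 < alpha < 1 -> (forall j, 0 < x j) ->
    powR (2 * zeta) (1 - alpha)^-1 <= x i ->
    derivable (fun t => Fma mu alpha (upd x i t)) (x i) 1 /\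
    derive1 (fun t => Fma mu alpha (upd x i t)) (x i) <= 0.
Proof.
move=> zeta_gt1 mu_distr stable a x i /andP[a_gt0 a_lt1] x_gt0 x_i_large.
set w := fun j => powR (x j) a.
set A := gen_part mu i false w; set B := gen_part mu i true w.
set p := marg1 mu i true; set q := marg1 mu i false.
set C := \prod_(j < n | j != i) (marg1 mu j true * x j + marg1 mu j false).
have -> : (fun t => Fma mu a (upd x i t)) =
          (fun t => powR (A + powR t a * B) a^-1 / (p * C * t + q * C)).
  by apply/funext => t; rewrite Fma_upd mulrDl mulrAC.
have w_gt0 j : 0 < w j by exact: powR_gt0.
have g_gt0 : 0 < A + powR (x i) a * B.
  by rewrite /A /B -(gen_poly_split _ i); exact: gen_poly_gt0.
have C_gt0 : 0 < C by apply: prodr_gt0 => j _; exact: marg1_affine_gt0.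
have d_gt0 : 0 < p * C * x i + q * C.
  by rewrite -mulrAC -mulrDl mulr_gt0 // marg1_affine_gt0.
have A_ge0 : 0 <= A by rewrite gen_part_ge0 // => [|j]; [case: mu_distr | rewrite ltW].
have zeta_gt0 : 0 < zeta by rewrite (lt_trans ltr01).
have key : B * (q * C) <= 2 * zeta * (p * C) * A.
  have key0 := gen_part_stable i mu_distr stable (fun j => ltW (w_gt0 j)).
  apply: le_trans (_ : _ <= zeta * p * A * C) _.
    by rewrite mulrA ler_pM2r.
  rewrite (_ : 2 * zeta * (p * C) * A = 2 * (zeta * p * A * C)); last by ring.
  by rewrite ler_peMl ?ler1n // !mulr_ge0 ?(marg1_ge0 mu_distr) // ltW.
have dF := is_derive_powR_ratio a_gt0 (x_gt0 i) g_gt0 (lt0r_neq0 d_gt0).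
split; first by case: dF.
apply: (derive1_powR_ratio_le0 (zeta := 2 * zeta)) => //.
- by rewrite a_gt0 a_lt1.
- by rewrite mulr_ge0 ?(marg1_ge0 mu_distr) ?ltW.
- by rewrite mulr_gt0.
Qed.
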